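(* Let $f(n)=a_kn^k+a_{k-1}n^{k-1}+\cdots+a_0\in\mathbb{R}[n]$ be a polynomial of degree $k$ (so $a_k\neq0$). Then the sequence $(f(n))_{n\ge0}$ is: (1) not asymptotically $1$-log-concave if and only if $k=0$; (2) asymptotically $1$-log-concave but not asymptotically $2$-log-concave if and only if $k=1$; (3) asymptotically $r$-log-concave for every $r\geq1$ if and only if $k\geq 2$.
   Context: For a real sequence $\omega=(w_i)_{i\ge0}$ define $\widehat{\mathcal L}\omega=(w_{i+1}^2-w_iw_{i+2})_{i\ge0}$ and $\widehat{\mathcal L}^j\omega=\widehat{\mathcal L}(\widehat{\mathcal L}^{j-1}\omega)$. The sequence $\omega$ is asymptotically $r$-log-concave if there is $N$ such that $(\widehat{\mathcal L}^j\omega)_i>0$ for all $j\in\{1,\ldots,r\}$ and all $i\geq N$. *)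

From mathcomp Require Import all_boot all_order all_algebra.
From mathcomp Require Import reals.
Set Implicit Arguments. Unset Strict Implicit. Unset Printing Implicit Defensive.
Import Order.TTheory GRing.Theory Num.Theory.
Local Open Scope ring_scope.

Definition Lhat {R : realType} (w : nat -> R) : nat -> R :=
  fun i => w i.+1 ^+ 2 - w i * w i.+2.

Definition Lhat_iter {R : realType} (j : nat) (w : nat -> R) : nat -> R :=
  iter j (@Lhat R) w.

Definition asymp_rlc {R : realType} (r : nat) (w : nat -> R) : Prop :=
  exists N : nat, forall j i : nat, (1 <= j <= r)%N -> (N <= i)%N ->
    0 < Lhat_iter j w i.

From mathcomp Require Import all_boot all_order all_algebra.
From mathcomp Require Import reals polyrcf zify ring.
Import Order.TTheory GRing.Theory Num.Theory.
Set Implicit Arguments. Unset Strict Implicit.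
Local Open Scope ring_scope.

(* For a polynomial p write  D p := p(X + 1) - p  (the forward
   difference).  The algebraic identity
       p(x+1)^2 - p(x) p(x+2) = (D p)(x)^2 - p(x) (D D p)(x)
   shows that the operator Lhat, applied to the sequence (p(n))_n, gives the
   sequence of values of the polynomial  Lpoly p := (D p)^2 - p * D (D p).
   If p has degree d >= 1 and leading coefficient a, then D p has degree d-1
   with leading coefficient d a, hence Lpoly p has degree 2d-2 and leading
   coefficient d^2 a^2 - d (d-1) a^2 = d a^2 > 0.  Consequently:
   - degree 0: Lhat kills constant sequences;
   - degree 1: Lhat gives a positive constant, which Lhat then kills;
   - degree d >= 2: 2d-2 >= 2, so every iterate of Lpoly has positive leading
     coefficient, and a polynomial with positive leading coefficient is
     eventually positive on the naturals.
   The leading-coefficient bookkeeping is done with the notion [formal_lead]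
   ("degree at most m, with coefficient c at X^m"), which, unlike size and
   lead_coef, behaves additively and multiplicatively even when c = 0.
   The file develops formal_lead, then fdiff and Lpoly with their degree
   behaviour, then the passage to sequences; the corollary follows by a case
   analysis on the degree. *)

Section FormalLead.
Variable R : nzRingType.
Implicit Types (p q A B : {poly R}) (m : nat) (c : R).

Definition formal_lead q m c := (size q <= m.+1)%N /\ q`_m = c.

Lemma formal_lead_size p m : size p = m.+1 -> formal_lead p m (lead_coef p).
Proof. by move=> sp; split; rewrite ?sp // lead_coefE sp. Qed.

Lemma formal_lead0 m : formal_lead 0 m 0.
Proof. by split; rewrite ?size_poly0 ?coef0. Qed.

Lemma formal_leadD A B m ca cb :
  formal_lead A m ca -> formal_lead B m cb -> formal_lead (A + B) m (ca + cb).
Proof.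
move=> [sA cA] [sB cB]; split; last by rewrite coefD cA cB.
by apply: leq_trans (size_polyD _ _) _; rewrite geq_max sA sB.
Qed.

Lemma formal_leadN A m c : formal_lead A m c -> formal_lead (- A) m (- c).
Proof. by move=> [sA cA]; rewrite /formal_lead size_polyN coefN cA. Qed.

Lemma formal_leadM A B ma mb ca cb :
  formal_lead A ma ca -> formal_lead B mb cb ->
  formal_lead (A * B) (ma + mb) (ca * cb).
Proof.
move=> [sA cA] [sB cB]; split.
  apply: leq_trans (size_polyMleq _ _) _.
  by move: sA sB; case: (size A) => [|x]; case: (size B) => [|y] //=; lia.
rewrite coefM (bigD1 (Ordinal (leq_addr mb ma.+1))) //= subDnCA // subnn addn0.
rewrite cA cB big1 ?addr0 // => -[j hj] /= hne.
have {}hne : j <> ma by move=> E; move: hne; rewrite -val_eqE /= E eqxx.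
case: (ltngtP j ma) => [hlt|hgt|//].
  by rewrite [B`__]nth_default ?mulr0 //; apply: leq_trans sB _; lia.
by rewrite [A`__]nth_default ?mul0r //; apply: leq_trans sA _; lia.
Qed.

Lemma formal_lead_exact A m c :
  formal_lead A m c -> c != 0 -> size A = m.+1 /\ lead_coef A = c.
Proof.
move=> [sA cA] c0; suff hs : size A = m.+1 by rewrite lead_coefE hs.
apply/eqP; rewrite eqn_leq sA ltnNge; apply: contra c0 => hle.
by rewrite -cA nth_default.
Qed.

(* The forward difference p(X + 1) - p, with p(X + 1) written through the
   Taylor expansion  p(X + 1) = sum_i p^(i)/i!. *)
Definition fdiff p : {poly R} := \sum_(i < size p) p^`N(i) - p.

Lemma horner_fdiff p x : (fdiff p).[x] = p.[x + 1] - p.[x].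
Proof.
rewrite (nderiv_taylor p (commr1 x)) hornerD hornerN horner_sum.
by under [in RHS]eq_bigr do rewrite expr1n mulr1.
Qed.

Lemma fdiff_const p : (size p <= 1)%N -> fdiff p = 0.
Proof.
move=> hp; have [->|nz] := eqVneq p 0.
  by rewrite /fdiff size_poly0 big_ord0 subr0.
rewrite /fdiff (_ : size p = 1%N) ?big_ord1 ?nderivn0 ?subrr //.
by apply/eqP; rewrite eqn_leq hp size_poly_gt0.
Qed.

(* The difference lowers the degree by one and multiplies the top
   coefficient by the degree: only p^`N(1) = p^`() reaches X^m. *)
Lemma fdiff_formal_lead p m c :
  formal_lead p m.+1 c -> formal_lead (fdiff p) m (c *+ m.+1).
Proof.
move=> [sp cp].
have -> : fdiff p = \sum_(i < m.+1) p^`N(i.+1).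
  rewrite /fdiff (big_ord_widen m.+2 (fun i => p^`N(i))) // big_mkcond /=.
  rewrite (eq_bigr (fun i : 'I_m.+2 => p^`N(i))) => [|i _].
    by rewrite big_ord_recl nderivn0 addrC addrK.
  by case: ltnP => // /nderivn_poly0->.
split.
  apply: (big_ind (fun q => size q <= m.+1)%N) => [|q1 q2 h1 h2|i _].
  - by rewrite size_poly0.
  - by apply: leq_trans (size_polyD _ _) _; rewrite geq_max h1 h2.
  - apply: leq_trans (size_poly _ _) _.
    by rewrite leq_subLR (leq_trans sp) // addSn ltnS leq_addl.
rewrite coef_sum big_ord_recl coef_nderivn add1n bin1 cp big1 ?addr0 //.
move=> i _; rewrite coef_nderivn nth_default ?mul0rn //.
by apply: leq_trans sp _; rewrite /= /bump leq0n add1n !addSn !ltnS leq_addl.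
Qed.

End FormalLead.
Arguments fdiff {R}.

Section Lpoly.
Variable R : comNzRingType.
Implicit Types (p : {poly R}) (m : nat).

Definition Lpoly p : {poly R} := fdiff p ^+ 2 - p * fdiff (fdiff p).

(* The identity b^2 - a c = (b - a)^2 - a ((c - b) - (b - a)). *)
Lemma horner_Lpoly p x :
  (Lpoly p).[x] = p.[x + 1] ^+ 2 - p.[x] * p.[x + 1 + 1].
Proof.
by rewrite /Lpoly hornerD hornerN expr2 !hornerM !horner_fdiff; ring.
Qed.

Lemma Lpoly_const p : (size p <= 1)%N -> Lpoly p = 0.
Proof.
move=> hp; rewrite /Lpoly fdiff_const // fdiff_const ?size_poly0 //.
by rewrite expr0n mulr0 subrr.
Qed.

Lemma Lpoly_formal_lead p m :
  size p = m.+2 -> formal_lead (Lpoly p) (m + m) (lead_coef p ^+ 2 *+ m.+1).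
Proof.
move=> /formal_lead_size Dp; set a := lead_coef p in Dp *.
have D1 := fdiff_formal_lead Dp.
have D2 : formal_lead (p * fdiff (fdiff p)) (m + m) (a * (a *+ m.+1 *+ m)).
  case: m Dp D1 => [|m] Dp D1.
    by rewrite fdiff_const ?D1.1 // mulr0 mulr0n mulr0; apply: formal_lead0.
  by rewrite -addSnnS; apply: formal_leadM Dp (fdiff_formal_lead D1).
have top : a *+ m.+1 * (a *+ m.+1) - a * (a *+ m.+1 *+ m) = a ^+ 2 *+ m.+1.
  rewrite mulrnAl mulrnAr -!mulrnA mulrnAr -expr2 -mulrnBr ?leq_mul //.
  by rewrite -mulnBr subSnn muln1.
rewrite /Lpoly expr2 -top.
exact: formal_leadD (formal_leadM D1 D1) (formal_leadN D2).
Qed.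

End Lpoly.
Arguments Lpoly {R}.

Section Positivity.
Variable R : realDomainType.
Implicit Types (p : {poly R}).

Lemma Lpoly_size_lead p : (2 <= size p)%N ->
  size (Lpoly p) = (size p + size p - 3)%N /\ 0 < lead_coef (Lpoly p).
Proof.
move=> hp; have [m sp] : exists m, size p = m.+2 by exists (size p).-2; lia.
have a0 : lead_coef p != 0 by rewrite lead_coef_eq0 -size_poly_eq0 sp.
have pos : 0 < lead_coef p ^+ 2 *+ m.+1.
  by rewrite pmulrn_lgt0 // exprn_even_gt0 //= a0 orbT.
have [-> ->] := formal_lead_exact (Lpoly_formal_lead sp) (lt0r_neq0 pos).
by split=> //; rewrite sp; lia.
Qed.

(* Degree d >= 2 gives degree 2d - 2 >= d, so the degree of the iterates
   never drops below 2 and every iterate has positive leading coefficient. *)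
Lemma iter_Lpoly_lead_gt0 p j : (3 <= size p)%N -> (0 < j)%N ->
  0 < lead_coef (iter j Lpoly p).
Proof.
move=> hp; have big : forall j, (3 <= size (iter j Lpoly p))%N.
  elim=> // i IH /=; have [-> _] := Lpoly_size_lead (ltnW IH).
  by move: IH; set s := size _; lia.
by case: j => // j _ /=; have [_] := Lpoly_size_lead (ltnW (big j)).
Qed.

End Positivity.

Section Sequences.
Variable R : realType.
Implicit Types (p q : {poly R}) (w : nat -> R).

Definition pseq p : nat -> R := fun n => p.[n%:R].

Lemma Lhat_pseq p i : Lhat (pseq p) i = pseq (Lpoly p) i.
Proof. by rewrite /pseq horner_Lpoly !natr1. Qed.

Lemma Lhat_iter_pseq p j i : Lhat_iter j (pseq p) i = pseq (iter j Lpoly p) i.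
Proof.
elim: j i => // j IH i.
change (Lhat (Lhat_iter j (pseq p)) i = pseq (Lpoly (iter j Lpoly p)) i).
by rewrite -Lhat_pseq /Lhat !IH.
Qed.

Lemma pseq_eventually_gt0 q : 0 < lead_coef q ->
  exists N, forall i, (N <= i)%N -> 0 < pseq q i.
Proof.
move=> lq; have [x0 Hx] := poly_pinfty_gt_lc lq.
exists (Num.bound `|x0|) => i hi; apply: lt_le_trans lq (Hx _ _).
apply: le_trans (ler_norm x0) _.
apply: le_trans (ltW (archi_boundP (normr_ge0 x0))) _.
by rewrite ler_nat.
Qed.

Lemma asymp_rlc_of_eventually_gt0 w r :
  (forall j, (1 <= j <= r)%N ->
     exists N, forall i, (N <= i)%N -> 0 < Lhat_iter j w i) ->
  asymp_rlc r w.
Proof.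
elim: r => [_|r IH H]; first by exists 0%N => j i; lia.
have [N HN] : asymp_rlc r w by apply: IH => j hj; apply: H; lia.
have [M HM] := H r.+1 (leqnn _).
exists (maxn N M) => j i hj hi.
have [->|hne] := eqVneq j r.+1; first by apply: HM; lia.
by apply: HN; move/eqP: hne; lia.
Qed.

Lemma not_asymp_rlc w r j : (1 <= j <= r)%N ->
  (forall i, Lhat_iter j w i = 0) -> ~ asymp_rlc r w.
Proof.
by move=> hj H0 [N HN]; have := HN j N hj (leqnn N); rewrite H0 ltxx.
Qed.

Lemma asymp_rlc_pseq p r :
  (forall j, (1 <= j <= r)%N -> 0 < lead_coef (iter j Lpoly p)) ->
  asymp_rlc r (pseq p).
Proof.
move=> H; apply: asymp_rlc_of_eventually_gt0 => j /H /pseq_eventually_gt0.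
by case=> N HN; exists N => i /HN; rewrite Lhat_iter_pseq.
Qed.

Lemma pseq_deg0 p : (size p <= 1)%N -> ~ asymp_rlc 1 (pseq p).
Proof.
move=> hp; apply: (@not_asymp_rlc _ _ 1) => // i.
by rewrite Lhat_iter_pseq /= Lpoly_const // /pseq horner0.
Qed.

Lemma pseq_deg_ge1 p : (2 <= size p)%N -> asymp_rlc 1 (pseq p).
Proof.
move=> hp; apply: asymp_rlc_pseq => j hj; have -> : j = 1%N by lia.
exact: (Lpoly_size_lead hp).2.
Qed.

Lemma pseq_deg1 p : size p = 2%N -> ~ asymp_rlc 2 (pseq p).
Proof.
move=> hp; apply: (@not_asymp_rlc _ _ 2) => // i.
have [sL _] := Lpoly_size_lead (eq_leq (esym hp)).
by rewrite Lhat_iter_pseq /= Lpoly_const ?sL ?hp // /pseq horner0.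
Qed.

Lemma pseq_deg_ge2 p r : (3 <= size p)%N -> asymp_rlc r (pseq p).
Proof.
move=> hp; apply: asymp_rlc_pseq => j /andP[hj _].
exact: iter_Lpoly_lead_gt0.
Qed.

End Sequences.

Theorem corollary4p10 (R : realType) (f : {poly R}) (hf : f != 0) :
  let k := (size f).-1 in
  let w := fun n : nat => f.[n%:R] in
  [/\ (~ asymp_rlc 1 w <-> k = 0%N),
      ((asymp_rlc 1 w /\ ~ asymp_rlc 2 w) <-> k = 1%N)
    & ((forall r : nat, (1 <= r)%N -> asymp_rlc r w) <-> (2 <= k)%N)].
Proof.
move=> k w; have sf : size f = k.+1 by rewrite prednK // size_poly_gt0.
clearbody k; case: k sf => [|[|k]] sf.
- have nA1 := pseq_deg0 (eq_leq sf).
  split; [by [] | by split=> [[/nA1]|] | by split=> // /(_ 1%N isT) /nA1].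
- have A1 := pseq_deg_ge1 (eq_leq (esym sf)).
  have nA2 := pseq_deg1 sf.
  split; [by split=> // /(_ A1) | by [] | by split=> // /(_ 2%N isT) /nA2].
- have Ar r : asymp_rlc r w by apply: pseq_deg_ge2; rewrite sf.
  split; [by split=> // /(_ (Ar 1%N)) | by split=> // -[_ /(_ (Ar 2%N))] |].
  by split=> // _ r _; apply: Ar.
Qed.
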